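(* Let $p$ be an odd prime and $k\ge0$. Call a pair $(B,C)\in\mathbb{Z}_p^2$ admissible if $p^k\mid B$, $p^{k+1}\nmid B$ and $p^{k+1}\mid C$. (1) Let $A,A'\in\mathbb{Z}_p$, let $(B,C)$ and $(B',C')$ be admissible, and assume $p\nmid A^2-C^2$ and $p\nmid A'^2-C'^2$. If $f_{(A,B,C)}\equiv f_{(A',B',C')}\pmod{p^{2k+5}}$, then $A\equiv A'\pmod{p^{2k+3}}$. (2) Fix $A,A'\in\mathbb{Z}_p$ and an admissible pair $(B,C)$, with $p\nmid A^2-C^2$ and $A\equiv A'\pmod{p^{2k+3}}$. Then there is exactly one residue class $h\in(\mathbb{Z}/p^{2k+5}\mathbb{Z})[x]$ for which the following holds: there exists an admissible pair $(B',C')$ with $p^2(B'x+C')^2\equiv h\pmod{p^{2k+5}}$ and $f_{(A,B,C)}\equiv f_{(A',B',C')}\pmod{p^{2k+5}}$.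
   Context: For $A,B,C\in\mathbb{Z}_p$, define $f_{(A,B,C)}(x)=(x^2+pA)^2-p^2(Bx+C)^2\in\mathbb{Z}_p[x]$. Congruences of polynomials are coefficientwise. *)

From HB Require Import structures.
From mathcomp Require Import all_boot all_order all_algebra.
From mathcomp Require Import boolp classical_sets functions.
Set Implicit Arguments. Unset Strict Implicit. Unset Printing Implicit Defensive.
Import Order.TTheory GRing.Theory Num.Theory.
Local Open Scope ring_scope.

(* p-adic integers modelled as the inverse limit of Z/p^n Z:
   a sequence a : nat -> int with a (n+1) = a n (mod p^n).
   The residue of such an element modulo p^m is (a m mod p^m).
   Ring operations are pointwise. *)
Notation seqZ := (nat -> int).

Definition is_padic (p : nat) (a : seqZ) : Prop :=
  forall n : nat, (a n.+1 = a n %[mod (p ^ n)%:Z])%Z.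

Definition pcong (p m : nat) (a b : seqZ) : Prop :=
  ((p ^ m)%:Z %| a m - b m)%Z.

Definition pdvd (p m : nat) (a : seqZ) : Prop := pcong p m a 0.

Definition polycong (p m : nat) (f g : {poly seqZ}) : Prop :=
  forall i : nat, pcong p m f`_i g`_i.

(* congruence of a polynomial over Z_p with an integer polynomial
   representing a class in (Z/p^m Z)[x] *)
Definition polycong_int (p m : nat) (f : {poly seqZ}) (h : {poly int}) : Prop :=
  forall i : nat, ((p ^ m)%:Z %| (f`_i) m - h`_i)%Z.

Definition fABC (p : nat) (A B C : seqZ) : {poly seqZ} :=
  ('X ^+ 2 + (p%:R * A)%:P) ^+ 2 - ((p%:R : seqZ) ^+ 2)%:P * (B%:P * 'X + C%:P) ^+ 2.

Definition sqpart (p : nat) (B C : seqZ) : {poly seqZ} :=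
  ((p%:R : seqZ) ^+ 2)%:P * (B%:P * 'X + C%:P) ^+ 2.

Definition admissible (p k : nat) (B C : seqZ) : Prop :=
  pdvd p k B /\ ~ pdvd p k.+1 B /\ pdvd p k.+1 C.

(* The difference f_(A,B,C) - f_(A',B',C') has coefficients
   2p(A - A') - p^2(B^2 - B'^2) at x^2, -2p^2(BC - B'C') at x and
   p^2((A^2 - C^2) - (A'^2 - C'^2)) at 1.  Write B = p^k b, C = p^(k+1) c with
   b a unit, and B' = p^k b', C' = p^(k+1) c'.  The x^2 congruence gives
   2(A - A') = p^(2k+1)(b^2 - b'^2) mod p^(2k+4); hence A = A' mod p, and A + A'
   is a unit because A is.  Substituting into the constant term yields
   (b^2 - b'^2)(A + A') = 2p(c^2 - c'^2) mod p^2, while the x term gives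
   bc = b'c' mod p; together they force p^2 | b^2 - b'^2, and then
   p^(2k+3) | A - A'.
   Conversely, if A - A' = p^(2k+3) t and u b = 1 mod p, then
   B' := p^k (b - p^2 t u), C' := C makes all three coefficients vanish
   mod p^(2k+5).  The class h is unique because
   p^2(B'x + C')^2 = (x^2 + pA')^2 - f_(A',B',C'). *)

From HB Require Import structures.
From mathcomp Require Import all_boot all_order all_algebra.
From mathcomp Require Import boolp classical_sets functions.
From mathcomp Require Import ring zify.
Import Order.TTheory GRing.Theory Num.Theory.
Set Implicit Arguments. Unset Strict Implicit. Unset Printing Implicit Defensive.
Local Open Scope ring_scope.

Lemma expr_2kD (R : pzSemiRingType) (x : R) k j :
  x ^+ (2 * k + j) = x ^+ k * x ^+ k * x ^+ j.
Proof. by rewrite exprD mul2n -addnn exprD. Qed.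

Lemma PoszX p m : (p ^ m)%:Z = p%:Z ^+ m.
Proof. by rewrite -!natz natrX. Qed.

Section PrimePowerDivisibility.
Variables (p : nat) (p_prime : prime p) (p_odd : odd p).
Local Notation P := (p%:Z).

Lemma coprimez_p x : ~~ (P %| x)%Z -> coprimez P x.
Proof. by rewrite coprimezE prime_coprime -?dvdzE. Qed.

Lemma dvdz_pX_cancel_pX m n x : (P ^+ (m + n) %| P ^+ m * x)%Z = (P ^+ n %| x)%Z.
Proof. by rewrite exprD dvdz_mul2l // expf_neq0 // eqz_nat -lt0n prime_gt0. Qed.

Lemma dvdz_pX_cancel2 n x : (P ^+ n %| 2 * x)%Z = (P ^+ n %| x)%Z.
Proof.
rewrite Gauss_dvdzr // coprimezXl // coprimez_p // dvdzE /= dvdn_prime2 //.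
by apply: contraTneq p_odd => ->.
Qed.

Lemma dvdz_pX_le m n x : (m <= n)%N -> (P ^+ n %| x)%Z -> (P ^+ m %| x)%Z.
Proof. by move/(dvdz_exp2l P); apply: dvdz_trans. Qed.

Lemma dvdz_p_pX n x : (0 < n)%N -> (P ^+ n %| x)%Z -> (P %| x)%Z.
Proof. by rewrite -{2}[P]expr1; apply: dvdz_pX_le. Qed.

Lemma dvdz_p2_sqr_diff be be' ga ga' s :
  ~~ (P %| be)%Z -> ~~ (P %| s)%Z -> (P %| be * ga - be' * ga')%Z ->
  (P ^+ 2 %| (be ^+ 2 - be' ^+ 2) * s - 2 * P * (ga ^+ 2 - ga' ^+ 2))%Z ->
  (P ^+ 2 %| be ^+ 2 - be' ^+ 2)%Z.
Proof.
move=> Pbe Ps Pbg Hs; set D := be ^+ 2 - be' ^+ 2; set G := ga ^+ 2 - ga' ^+ 2.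
have Ds_split : D * s = (D * s - 2 * P * G) + 2 * P * G by rewrite subrK.
have PD : (P %| D)%Z.
  rewrite -(Gauss_dvdzl _ (coprimez_p Ps)) Ds_split rpredD ?(dvdz_p_pX _ Hs) //.
  by rewrite mulrAC dvdz_mull.
have PG : (P %| G)%Z.
  have Pbe2 := coprimezXr 2 (coprimez_p Pbe).
  rewrite -(Gauss_dvdzr _ Pbe2).
  have -> : be ^+ 2 * G = (be * ga - be' * ga') * (be * ga + be' * ga') - ga' ^+ 2 * D.
    by rewrite /G /D; ring.
  by rewrite rpredB ?(dvdz_mulr _ Pbg) ?(dvdz_mull _ PD).
have [g eG] := dvdzP PG.
rewrite -(Gauss_dvdzl _ (coprimezXl 2 (coprimez_p Ps))) Ds_split rpredD //.
have -> : 2 * P * G = 2 * g * P ^+ 2 by rewrite eG; ring.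
by rewrite dvdz_mull.
Qed.

Lemma normalized_coef_congr_dvdz_sub k a a' be be' ga ga' :
  ~~ (P %| be)%Z -> ~~ (P %| a)%Z ->
  (P ^+ (2 * k + 4) %| 2 * (a - a') - P ^+ (2 * k + 1) * (be ^+ 2 - be' ^+ 2))%Z ->
  (P %| be * ga - be' * ga')%Z ->
  (P ^+ (2 * k + 3) %| (a - a') * (a + a') - P ^+ (2 * k + 2) * (ga ^+ 2 - ga' ^+ 2))%Z ->
  (P ^+ (2 * k + 3) %| a - a')%Z.
Proof.
move=> Pbe Pa He Pbg Hs.
set D := be ^+ 2 - be' ^+ 2 in He *; set G := ga ^+ 2 - ga' ^+ 2 in Hs *.
set e := 2 * (a - a') - _ in He.
have e2 : 2 * (a - a') = e + P ^+ (2 * k + 1) * D by rewrite subrK.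
have He3 : (P ^+ (2 * k + 3) %| e)%Z by apply: dvdz_pX_le He; rewrite leq_add2l.
have Paa : (P %| a - a')%Z.
  apply: (@dvdz_p_pX (2 * k + 1)); first by rewrite addn1.
  rewrite -dvdz_pX_cancel2 e2 rpredD ?(dvdz_mulr _ (dvdzz _)) //.
  by apply: dvdz_pX_le He3; rewrite leq_add2l.
have Ps : ~~ (P %| a + a')%Z.
  apply: contra Pa => Ps; rewrite -[P]expr1 -dvdz_pX_cancel2 expr1.
  have -> : 2 * a = (a + a') + (a - a') by ring.
  exact: rpredD.
have P2Ds : (P ^+ 2 %| D * (a + a') - 2 * P * G)%Z.
  rewrite -(dvdz_pX_cancel_pX (2 * k + 1)) -addnA.
  have -> : P ^+ (2 * k + 1) * (D * (a + a') - 2 * P * G)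
          = 2 * ((a - a') * (a + a') - P ^+ (2 * k + 2) * G) - e * (a + a').
    by rewrite /e !expr_2kD; ring.
  by rewrite rpredB ?(dvdz_mull _ Hs) ?(dvdz_mulr _ He3).
have [d eD] := dvdzP (dvdz_p2_sqr_diff Pbe Ps Pbg P2Ds).
rewrite -dvdz_pX_cancel2 e2 rpredD // /D eD mulrCA -exprD -addnA.
exact: dvdz_mull (dvdzz _).
Qed.

Lemma coef_congr_dvdz_sub k a b c a' b' c' :
  (P ^+ k %| b)%Z -> ~~ (P ^+ k.+1 %| b)%Z -> (P ^+ k.+1 %| c)%Z ->
  (P ^+ k %| b')%Z -> (P ^+ k.+1 %| c')%Z -> ~~ (P %| a ^+ 2 - c ^+ 2)%Z ->
  (P ^+ (2 * k + 5) %| 2 * P * (a - a') - P ^+ 2 * (b ^+ 2 - b' ^+ 2))%Z ->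
  (P ^+ (2 * k + 5) %| 2 * P ^+ 2 * (b * c - b' * c'))%Z ->
  (P ^+ (2 * k + 5) %| P ^+ 2 * ((a ^+ 2 - c ^+ 2) - (a' ^+ 2 - c' ^+ 2)))%Z ->
  (P ^+ (2 * k + 3) %| a - a')%Z.
Proof.
move=> /dvdzP[be ->] Pb /dvdzP[ga ->] /dvdzP[be' ->] /dvdzP[ga' ->] Pac H2 H1 H0.
have Pbe : ~~ (P %| be)%Z.
  by apply: contra Pb => Pbe; rewrite exprSr mulrC dvdz_mul.
have Pa : ~~ (P %| a)%Z.
  apply: contra Pac => Pa; rewrite rpredB // dvdz_exp //.
  by rewrite dvdz_mull // exprS dvdz_mulr.
apply: (normalized_coef_congr_dvdz_sub (be' := be') (ga := ga) (ga' := ga') Pbe Pa).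
- move: H2; rewrite (_ : 2 * k + 5 = 1 + (2 * k + 4))%N; last by rewrite addnCA.
  rewrite (_ : 2 * P * (a - a') - _ = P ^+ 1 * (2 * (a - a') - P ^+ (2 * k + 1) * (be ^+ 2 - be' ^+ 2))).
    by rewrite dvdz_pX_cancel_pX.
  by rewrite !expr_2kD; ring.
- move: H1; rewrite (_ : 2 * k + 5 = 2 * k + 3 + 2)%N; last by rewrite -addnA.
  rewrite (_ : 2 * P ^+ 2 * _ = P ^+ (2 * k + 3) * (2 * (be * ga - be' * ga'))).
    by rewrite dvdz_pX_cancel_pX dvdz_pX_cancel2; apply: dvdz_p_pX.
  by rewrite !expr_2kD !exprS; ring.
- move: H0; rewrite (_ : 2 * k + 5 = 2 + (2 * k + 3))%N; last by rewrite addnCA.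
  rewrite (_ : P ^+ 2 * _ = P ^+ 2 * ((a - a') * (a + a') - P ^+ (2 * k + 2) * (ga ^+ 2 - ga' ^+ 2))).
    by rewrite dvdz_pX_cancel_pX.
  by rewrite !expr_2kD !exprS; ring.
Qed.

Lemma coef_congr_exists k a b c a' :
  (P ^+ k %| b)%Z -> ~~ (P ^+ k.+1 %| b)%Z -> (P ^+ k.+1 %| c)%Z ->
  (P ^+ (2 * k + 3) %| a - a')%Z ->
  exists b', [/\ (P ^+ k %| b')%Z, ~~ (P ^+ k.+1 %| b')%Z,
    (P ^+ (2 * k + 5) %| 2 * P * (a - a') - P ^+ 2 * (b ^+ 2 - b' ^+ 2))%Z,
    (P ^+ (2 * k + 5) %| 2 * P ^+ 2 * (b * c - b' * c))%Z &
    (P ^+ (2 * k + 5) %| P ^+ 2 * ((a ^+ 2 - c ^+ 2) - (a' ^+ 2 - c ^+ 2)))%Z].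
Proof.
move=> /dvdzP[be ->] Pb /dvdzP[ga ->] /dvdzP[t eaa].
have Pbe : ~~ (P %| be)%Z.
  by apply: contra Pb => Pbe; rewrite exprSr mulrC dvdz_mul.
have [[u v] /= uv] : exists uv : int * int, uv.1 * be + uv.2 * P = 1.
  by apply/coprimezP; rewrite coprimez_sym coprimez_p.
have ube : 1 - u * be = v * P by rewrite -uv; ring.
exists ((be - t * u * P ^+ 2) * P ^+ k); split.
- exact: dvdz_mull (dvdzz _).
- apply: contra Pb => Pb'.
  have -> : be * P ^+ k = (be - t * u * P ^+ 2) * P ^+ k + (t * u * P) * P ^+ k.+1.
    by rewrite !exprS; ring.
  by rewrite rpredD // dvdz_mull.
- rewrite eaa (_ : _ - _ = P ^+ (2 * k + 4) * (2 * t * (1 - u * be) + (t * u * P) ^+ 2)).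
    rewrite ube (_ : _ * _ = (2 * t * v + t ^+ 2 * u ^+ 2 * P) * P ^+ (2 * k + 5)).
      exact: dvdz_mull (dvdzz _).
    by rewrite !expr_2kD; ring.
  by rewrite !expr_2kD; ring.
- rewrite (_ : _ * _ = 2 * t * u * ga * P ^+ (2 * k + 5)).
    exact: dvdz_mull (dvdzz _).
  by rewrite !expr_2kD !exprS; ring.
- rewrite (_ : _ * _ = t * (a + a') * P ^+ (2 * k + 5)).
    exact: dvdz_mull (dvdzz _).
  by rewrite -[a](subrK a') eaa !expr_2kD; ring.
Qed.

End PrimePowerDivisibility.

Section PadicSequences.
Variable p : nat.
Local Notation P := (p%:Z).

Lemma is_padicP x : is_padic p x <-> forall n, (P ^+ n %| x n.+1 - x n)%Z.
Proof.
by split=> hx n; [move/eqP: (hx n) | apply/eqP]; rewrite eqz_mod_dvd PoszX.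
Qed.

Lemma is_padicB x y : is_padic p x -> is_padic p y -> is_padic p (x - y).
Proof.
move=> /is_padicP hx /is_padicP hy; apply/is_padicP => n.
have -> : (x - y) n.+1 - (x - y) n = (x n.+1 - x n) - (y n.+1 - y n).
  by rewrite !fctE; ring.
exact: rpredB.
Qed.

Lemma is_padicM x y : is_padic p x -> is_padic p y -> is_padic p (x * y).
Proof.
move=> /is_padicP hx /is_padicP hy; apply/is_padicP => n.
have -> : (x * y) n.+1 - (x * y) n = x n.+1 * (y n.+1 - y n) + (x n.+1 - x n) * y n.
  by rewrite !fctE; ring.
by rewrite rpredD ?(dvdz_mull _ (hy n)) ?(dvdz_mulr _ (hx n)).
Qed.

Lemma is_padic_cst c : is_padic p (cst c).
Proof. by apply/is_padicP => n; rewrite subrr dvdz0. Qed.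

Lemma dvdz_padic_sub x m n : is_padic p x -> (m <= n)%N -> (P ^+ m %| x n - x m)%Z.
Proof.
move=> /is_padicP hx; elim: n => [|n IHn]; first by rewrite leqn0 => /eqP ->; rewrite subrr dvdz0.
rewrite leq_eqVlt ltnS => /orP[/eqP -> | mn]; first by rewrite subrr dvdz0.
have -> : x n.+1 - x m = (x n.+1 - x n) + (x n - x m) by ring.
by rewrite rpredD ?IHn // (dvdz_trans (dvdz_exp2l P mn) (hx n)).
Qed.

Lemma pcong_lift x y m n : is_padic p x -> is_padic p y -> (m <= n)%N ->
  pcong p m x y <-> (P ^+ m %| x n - y n)%Z.
Proof.
move=> hx hy mn; have := dvdz_padic_sub (is_padicB hx hy) mn.
rewrite /pcong PoszX !fctE => Pxy.
have -> : x n - y n = (x n - y n - (x m - y m)) + (x m - y m) by ring.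
by rewrite (rpredDl _ Pxy).
Qed.

Lemma pdvd_lift x m n : is_padic p x -> (m <= n)%N ->
  pdvd p m x <-> (P ^+ m %| x n)%Z.
Proof. by move=> hx mn; rewrite /pdvd (pcong_lift hx (is_padic_cst 0) mn) subr0. Qed.

Lemma admissible_lift k B C n : is_padic p B -> is_padic p C -> (k < n)%N ->
  admissible p k B C <->
  [/\ (P ^+ k %| B n)%Z, ~~ (P ^+ k.+1 %| B n)%Z & (P ^+ k.+1 %| C n)%Z].
Proof.
move=> hB hC kn.
rewrite /admissible (pdvd_lift hB (ltnW kn)) (pdvd_lift hB kn) (pdvd_lift hC kn).
by split=> [[? [/negP ? ?]] | [? /negP ? ?]].
Qed.

Lemma seqZ_natE n m : (n%:R : seqZ) m = n%:R.
Proof. by rewrite natmulfctE. Qed.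

Lemma seqZ0E m : (0 : seqZ) m = 0.
Proof. by []. Qed.

Lemma fABC_sub A B C A' B' C' :
  fABC p A B C - fABC p A' B' C' =
    (2 * p%:R * (A - A') - p%:R ^+ 2 * (B ^+ 2 - B' ^+ 2))%:P * 'X^2
  - (2 * p%:R ^+ 2 * (B * C - B' * C'))%:P * 'X
  + (p%:R ^+ 2 * ((A ^+ 2 - C ^+ 2) - (A' ^+ 2 - C' ^+ 2)))%:P.
Proof. by rewrite /fABC !polyCD !polyCM !polyCB ?polyCX; ring. Qed.

Lemma polycong_fABC m A B C A' B' C' :
  polycong p m (fABC p A B C) (fABC p A' B' C') <->
  [/\ (P ^+ m %| 2 * P * (A m - A' m) - P ^+ 2 * (B m ^+ 2 - B' m ^+ 2))%Z,
      (P ^+ m %| 2 * P ^+ 2 * (B m * C m - B' m * C' m))%Z &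
      (P ^+ m %| P ^+ 2 * ((A m ^+ 2 - C m ^+ 2) - (A' m ^+ 2 - C' m ^+ 2)))%Z].
Proof.
have coef_sub i : (fABC p A B C)`_i m - (fABC p A' B' C')`_i m
                  = (fABC p A B C - fABC p A' B' C')`_i m by rewrite [in RHS]coefB.
have c2 : (fABC p A B C - fABC p A' B' C')`_2 m
          = 2 * P * (A m - A' m) - P ^+ 2 * (B m ^+ 2 - B' m ^+ 2).
  by rewrite fABC_sub !coefE /= !fctE /= ?seqZ_natE ?seqZ0E ?natz; ring.
have c1 : (fABC p A B C - fABC p A' B' C')`_1 m
          = - (2 * P ^+ 2 * (B m * C m - B' m * C' m)).
  by rewrite fABC_sub !coefE /= !fctE /= ?seqZ_natE ?seqZ0E ?natz; ring.
have c0 : (fABC p A B C - fABC p A' B' C')`_0 m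
          = P ^+ 2 * ((A m ^+ 2 - C m ^+ 2) - (A' m ^+ 2 - C' m ^+ 2)).
  by rewrite fABC_sub !coefE /= !fctE /= ?seqZ_natE ?seqZ0E ?natz; ring.
have c3 i : (fABC p A B C - fABC p A' B' C')`_i.+3 m = 0.
  by rewrite fABC_sub !coefE /= !fctE /= ?seqZ_natE ?seqZ0E ?natz; ring.
rewrite /polycong /pcong; split=> [H | [H2 H1 H0] [|[|[|i]]]]; rewrite ?PoszX ?coef_sub.
- by split; [rewrite -c2 | rewrite -rpredN -c1 | rewrite -c0]; rewrite -coef_sub -PoszX.
- by rewrite c0.
- by rewrite c1 rpredN.
- by rewrite c2.
- by rewrite c3 dvdz0.
Qed.

Lemma polycong_sym m f g : polycong p m f g -> polycong p m g f.
Proof. by move=> Hfg i; rewrite /pcong -opprB rpredN; apply: Hfg. Qed.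

Lemma polycong_trans m f g h :
  polycong p m f g -> polycong p m g h -> polycong p m f h.
Proof. by move=> Hfg Hgh i; have := rpredD (Hfg i) (Hgh i); rewrite addrA subrK. Qed.

Lemma sqpart_polycong m A B C B' C' :
  polycong p m (fABC p A B C) (fABC p A B' C') ->
  polycong p m (sqpart p B C) (sqpart p B' C').
Proof.
have sqpartE B1 C1 : sqpart p B1 C1 = ('X ^+ 2 + (p%:R * A)%:P) ^+ 2 - fABC p A B1 C1.
  by rewrite /fABC opprB addrC subrK.
move=> H i; rewrite /pcong !sqpartE.
set Q := _ ^+ 2; set f := fABC p A B C; set f' := fABC p A B' C'.
have -> : (Q - f)`_i m - (Q - f')`_i m = - (f`_i m - f'`_i m).
  by rewrite !coefB !fctE; ring.
by rewrite rpredN; apply: H.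
Qed.

Lemma polycong_int_map m f : polycong_int p m f (map_poly (fun x : seqZ => x m) f).
Proof. by move=> i; rewrite coef_map_id0 // subrr dvdz0. Qed.

Lemma polycong_int_uniq m f g h h' :
  polycong p m f g -> polycong_int p m f h -> polycong_int p m g h' ->
  forall i, (h'`_i = h`_i %[mod (p ^ m)%:Z])%Z.
Proof.
move=> Hfg Hf Hg i; apply/eqP; rewrite eqz_mod_dvd.
have -> : h'`_i - h`_i = (f`_i m - h`_i) - (f`_i m - g`_i m) - (g`_i m - h'`_i) by ring.
by apply: rpredB; first apply: rpredB; [apply: Hf | apply: Hfg | apply: Hg].
Qed.

End PadicSequences.

Lemma pcong_of_polycong_fABC p k (A B C A' B' C' : seqZ) :
  prime p -> odd p ->
  is_padic p A -> is_padic p B -> is_padic p C ->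
  is_padic p A' -> is_padic p B' -> is_padic p C' ->
  admissible p k B C -> pdvd p k B' -> pdvd p k.+1 C' ->
  ~ pdvd p 1 (A ^+ 2 - C ^+ 2) ->
  polycong p (2 * k + 5) (fABC p A B C) (fABC p A' B' C') ->
  pcong p (2 * k + 3) A A'.
Proof.
have kN : (k < 2 * k + 5)%N by lia.
have k3N : (2 * k + 3 <= 2 * k + 5)%N by lia.
have oN : (1 <= 2 * k + 5)%N by lia.
move=> p_prime p_odd hA hB hC hA' hB' hC'.
move=> /(admissible_lift hB hC kN)[Bk Bk1 Ck1] /(pdvd_lift hB' (ltnW kN)) B'k.
move=> /(pdvd_lift hC' kN) C'k1 AC /polycong_fABC[H2 H1 H0].
apply/(pcong_lift hA hA' k3N).
apply: (coef_congr_dvdz_sub p_prime p_odd Bk Bk1 Ck1 B'k C'k1 _ H2 H1 H0).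
have hAC : is_padic p (A ^+ 2 - C ^+ 2) := is_padicB (is_padicM hA hA) (is_padicM hC hC).
by move: AC; rewrite (pdvd_lift hAC oN) expr1 !fctE => /negP.
Qed.

Lemma exists_polycong_fABC p k (A B C A' : seqZ) :
  prime p ->
  is_padic p A -> is_padic p B -> is_padic p C -> is_padic p A' ->
  admissible p k B C -> pcong p (2 * k + 3) A A' ->
  exists B', [/\ is_padic p B', admissible p k B' C &
                 polycong p (2 * k + 5) (fABC p A B C) (fABC p A' B' C)].
Proof.
have kN : (k < 2 * k + 5)%N by lia.
have k3N : (2 * k + 3 <= 2 * k + 5)%N by lia.
move=> p_prime hA hB hC hA' /(admissible_lift hB hC kN)[Bk Bk1 Ck1].
move=> /(pcong_lift hA hA' k3N) AA'.
have [b' [b'k b'k1 H2 H1 H0]] := coef_congr_exists p_prime Bk Bk1 Ck1 AA'.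
exists (cst b'); split; first exact: is_padic_cst.
  exact/(admissible_lift (is_padic_cst p b') hC kN).
by apply/polycong_fABC.
Qed.

Unset Implicit Arguments.

Theorem claim6 (p k : nat) (hp : prime p) (hodd : odd p) :
  (forall A B C A' B' C' : seqZ,
     is_padic p A -> is_padic p B -> is_padic p C ->
     is_padic p A' -> is_padic p B' -> is_padic p C' ->
     admissible p k B C -> admissible p k B' C' ->
     ~ pdvd p 1 (A ^+ 2 - C ^+ 2) -> ~ pdvd p 1 (A' ^+ 2 - C' ^+ 2) ->
     polycong p (2 * k + 5) (fABC p A B C) (fABC p A' B' C') ->
     pcong p (2 * k + 3) A A') /\
  (forall A B C A' : seqZ,
     is_padic p A -> is_padic p B -> is_padic p C -> is_padic p A' ->
     admissible p k B C ->
     ~ pdvd p 1 (A ^+ 2 - C ^+ 2) ->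
     pcong p (2 * k + 3) A A' ->
     let good (h : {poly int}) :=
       exists B' C' : seqZ, is_padic p B' /\ is_padic p C' /\
         admissible p k B' C' /\
         polycong_int p (2 * k + 5) (sqpart p B' C') h /\
         polycong p (2 * k + 5) (fABC p A B C) (fABC p A' B' C') in
     exists h : {poly int}, good h /\
       forall h' : {poly int}, good h' ->
         forall i : nat, (h'`_i = h`_i %[mod (p ^ (2 * k + 5))%:Z])%Z).
Proof.
split.
  move=> A B C A' B' C' hA hB hC hA' hB' hC' hBC [hB'k [_ hC'k1]] hAC _.
  exact: pcong_of_polycong_fABC hp hodd hA hB hC hA' hB' hC' hBC hB'k hC'k1 hAC.
move=> A B C A' hA hB hC hA' hBC _ hAA' good.
have [B' [hB' hB'C hf]] := exists_polycong_fABC hp hA hB hC hA' hBC hAA'.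
exists (map_poly (fun x : seqZ => x (2 * k + 5)%N) (sqpart p B' C)); split.
  by exists B', C; do !split => //; apply: polycong_int_map.
move=> h' [B'' [C'' [_ [_ [_ [hh' hf']]]]]].
apply: polycong_int_uniq hh'; last exact: polycong_int_map.
exact: sqpart_polycong (polycong_trans (polycong_sym hf) hf').
Qed.
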